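(* Let $H:[0,T]\times\mathbb{R}^N\times\mathbb{R}^N\to\mathbb{R}$, and suppose there are functions $f:[0,T]\times\mathbb{R}^N\times\mathbb{B}\to\mathbb{R}^N$, $l:[0,T]\times\mathbb{R}^N\times\mathbb{B}\to\mathbb{R}$, with $\mathbb{B}$ the closed unit ball of $\mathbb{R}^{N+1}$, such that $H(t,x,p)=\sup_{a\in\mathbb{B}}\{\langle p,f(t,x,a)\rangle-l(t,x,a)\}$ for all $t,x,p$ and (R1) $f$ and $l$ are continuous; (R2) for every $R\geq0$ there is an integrable $K_R:[0,T]\to[0,\infty)$ with $|f(t,x,a)-f(t,y,a)|+|l(t,x,a)-l(t,y,a)|\leq K_R(t)|x-y|$ for all $x,y\in\mathbb{B}_R$, $a\in\mathbb{B}$ and a.e. $t$; (R3) there is an integrable $C:[0,T]\to[0,\infty)$ with $|f(t,x,a)|+|l(t,x,a)|\leq C(t)(1+|x|)$ for all $x$, $a\in\mathbb{B}$ and a.e. $t$. Then $H$ satisfies condition (A) (see context).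
   Context: $\mathbb{B}_R$ is the closed ball of radius $R$ centered at $0$; $\|W\|:=\sup_{\xi\in W}|\xi|$; $H^*(t,x,v)=\sup_p\{\langle v,p\rangle-H(t,x,p)\}$ and $\mathrm{dom}\,H^*(t,x,\cdot)=\{v:H^*(t,x,v)\neq\pm\infty\}$. Conditions: (H1) $H$ continuous in all variables. (H2) $H(t,x,\cdot)$ convex. (H3) for every $R\geq0$ there is $C_R\geq0$ with $|H(t,x,p)-H(t,x,q)|\leq C_R|p-q|$ for $t\in[0,T]$, $x\in\mathbb{B}_R$, all $p,q$. (H4) there is an integrable $c\geq0$ with $|H(t,x,p)-H(t,x,q)|\leq c(t)(1+|x|)|p-q|$ for a.e. $t$, all $x,p,q$. (H5) for every $R\geq0$ there is an integrable $k_R\geq0$ with $|H(t,x,p)-H(t,y,p)|\leq k_R(t)(1+|p|)|x-y|$ for $x,y\in\mathbb{B}_R$, all $p$, a.e. $t$. Condition (A): $H$ satisfies (H1)–(H5) and there is a continuous $\lambda:[0,T]\times\mathbb{R}^N\to[0,\infty)$ with $\|\mathrm{dom}\,H^*(t,x,\cdot)\|\leq\lambda(t,x)$ and $\|H^*(t,x,\mathrm{dom}\,H^*(t,x,\cdot))\|\leq\lambda(t,x)$ for all $t,x$; for every $R\geq0$ there is an integrable $\zeta_R\geq0$ such that $\lambda(t,\cdot)$ is $\zeta_R(t)$-Lipschitz on $\mathbb{B}_R$ for a.e. $t$; and there is an integrable $\vartheta\geq0$ with $\lambda(t,x)\leq\vartheta(t)(1+|x|)$ for all $x$ and a.e. $t$.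 *)

From HB Require Import structures.
From mathcomp Require Import all_boot all_order all_algebra.
From mathcomp Require Import all_classical all_reals all_analysis.
Set Implicit Arguments. Unset Strict Implicit. Unset Printing Implicit Defensive.
Import Order.TTheory GRing.Theory Num.Theory.
Import numFieldNormedType.Exports.
Local Open Scope classical_set_scope.
Local Open Scope ring_scope.

(* R^n is represented by row vectors 'rV[R]_n *)
Definition dotv {R : realType} {n : nat} (u v : 'rV[R]_n) : R :=
  \sum_(i < n) u 0 i * v 0 i.

Definition enorm {R : realType} {n : nat} (u : 'rV[R]_n) : R :=
  Num.sqrt (dotv u u).

Definition cball {R : realType} (n : nat) (r : R) : set 'rV[R]_n :=
  [set x | enorm x <= r].

Arguments cball {R} n r _.

Definition tint {R : realType} (T : R) : set R := [set t | 0 <= t <= T].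

Definition lebR {R : realType} := (@lebesgue_measure R).

Definition integ_nonneg {R : realType} (T : R) (c : R -> R) : Prop :=
  (forall t, tint T t -> 0 <= c t) /\
  lebR.-integrable (tint T) (EFin \o c).

Definition Hstar {R : realType} {N : nat}
  (H : R -> 'rV[R]_N -> 'rV[R]_N -> R) (t : R) (x v : 'rV[R]_N) : \bar R :=
  ereal_sup [set ((dotv v p - H t x p)%:E) | p in [set: 'rV[R]_N]].

Definition domHstar {R : realType} {N : nat}
  (H : R -> 'rV[R]_N -> 'rV[R]_N -> R) (t : R) (x : 'rV[R]_N) : set 'rV[R]_N :=
  [set v | Hstar H t x v \is a fin_num].

Section Conds.
Context {R : realType} {N : nat} (T : R) (H : R -> 'rV[R]_N -> 'rV[R]_N -> R).

Definition H1 : Prop :=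
  {within [set z : R * 'rV[R]_N * 'rV[R]_N | tint T z.1.1],
    continuous (fun z : R * 'rV[R]_N * 'rV[R]_N => H z.1.1 z.1.2 z.2)}.

Definition H2 : Prop :=
  forall t x, tint T t -> forall (p q : 'rV[R]_N) (s : R), 0 <= s <= 1 ->
    H t x (s *: p + (1 - s) *: q) <= s * H t x p + (1 - s) * H t x q.

Definition H3 : Prop :=
  forall r : R, 0 <= r -> exists C : R, 0 <= C /\
    forall t x p q, tint T t -> cball N r x ->
      `|H t x p - H t x q| <= C * enorm (p - q).

Definition H4 : Prop :=
  exists c : R -> R, integ_nonneg T c /\
    {ae lebR, forall t, tint T t -> forall x p q,
      `|H t x p - H t x q| <= c t * (1 + enorm x) * enorm (p - q)}.

Definition H5 : Prop :=
  forall r : R, 0 <= r -> exists k : R -> R, integ_nonneg T k /\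
    {ae lebR, forall t, tint T t -> forall x y p, cball N r x -> cball N r y ->
      `|H t x p - H t y p| <= k t * (1 + enorm p) * enorm (x - y)}.

Definition condA : Prop :=
  H1 /\ H2 /\ H3 /\ H4 /\ H5 /\
  exists lam : R -> 'rV[R]_N -> R,
    {within [set z : R * 'rV[R]_N | tint T z.1],
      continuous (fun z : R * 'rV[R]_N => lam z.1 z.2)} /\
    (forall t x, tint T t -> 0 <= lam t x) /\
    (forall t x, tint T t -> forall v, domHstar H t x v -> enorm v <= lam t x) /\
    (forall t x, tint T t -> forall v, domHstar H t x v ->
       (`|Hstar H t x v| <= (lam t x)%:E)%E) /\
    (forall r : R, 0 <= r -> exists zeta : R -> R, integ_nonneg T zeta /\
       {ae lebR, forall t, tint T t -> forall x y, cball N r x -> cball N r y ->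
          `|lam t x - lam t y| <= zeta t * enorm (x - y)}) /\
    (exists theta : R -> R, integ_nonneg T theta /\
       {ae lebR, forall t, tint T t -> forall x, lam t x <= theta t * (1 + enorm x)}).

End Conds.

From HB Require Import structures.
From mathcomp Require Import all_boot all_order all_algebra.
From mathcomp Require Import all_classical all_reals all_analysis.
From mathcomp Require Import ring lra.
Import Order.TTheory GRing.Theory Num.Theory.
Import numFieldNormedType.Exports.
Local Open Scope classical_set_scope.
Local Open Scope ring_scope.

(* Let lam t x be the supremum over the control ball of |f(t,x,a)| + |l(t,x,a)|.
   Each affine map p |-> <p, f(t,x,a)> - l(t,x,a) in the supremum defining H has
   slope of norm at most lam t x and is bounded by lam t x at p = 0, so H is
   lam-Lipschitz in p, H(t,x,p) <= lam (1 + |p|) and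
   H(t,x,s p) <= s H(t,x,p) + (s - 1) lam for s >= 1.  The first bound makes
   H^*(t,x,v) infinite when |v| > lam, the second forces every finite value of
   H^* below lam, and H^* >= -H(t,x,0) >= -lam.  Continuity of H and of lam comes
   from uniform continuity on the compact control ball, and the Lipschitz and
   growth bounds of (f, l) pass through the supremum with unchanged constants. *)

Section sup_image.
Context {R : realType} {Y : Type} {A : set Y}.
Implicit Types (g h : Y -> R) (M e : R).

Lemma sup_image_ub {g M a} :
  (forall b, A b -> g b <= M) -> A a -> g a <= sup [set g b | b in A].
Proof.
move=> gM Aa; apply: sup_upper_bound; last by exists a.
by split; [exists (g a), a | exists M => _ [b Ab <-]; exact: gM].
Qed.

Lemma sup_image_le {g} M :
  A !=set0 -> (forall b, A b -> g b <= M) -> sup [set g b | b in A] <= M.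
Proof.
move=> [a Aa] gM; apply: ge_sup; first by exists (g a), a.
by move=> _ [b Ab <-]; exact: gM.
Qed.

Lemma sup_image_leD {g h M e} : A !=set0 -> (forall b, A b -> h b <= M) ->
  (forall b, A b -> g b <= h b + e) ->
  sup [set g b | b in A] <= sup [set h b | b in A] + e.
Proof.
move=> A0 hM ghe; apply: sup_image_le => // b Ab.
by rewrite (le_trans (ghe _ Ab)) // lerD2r (sup_image_ub hM).
Qed.

Lemma dist_sup_image_le {g h e} M : A !=set0 ->
  (forall b, A b -> g b <= M) -> (forall b, A b -> h b <= M) ->
  (forall b, A b -> `|g b - h b| <= e) ->
  `|sup [set g b | b in A] - sup [set h b | b in A]| <= e.
Proof.
move=> A0 gM hM ghe.
have gh : sup [set g b | b in A] <= sup [set h b | b in A] + e.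
  apply: sup_image_leD hM _ => // b Ab.
  by rewrite -lerBlDl (le_trans (ler_norm _) (ghe b Ab)).
have hg : sup [set h b | b in A] <= sup [set g b | b in A] + e.
  apply: sup_image_leD gM _ => // b Ab.
  by rewrite -lerBlDl (le_trans (ler_norm _) _) // distrC ghe.
by rewrite ler_norml; apply/andP; split; lra.
Qed.

End sup_image.

Section euclidean.
Context {R : realType} {n : nat}.
Implicit Types (u v w : 'rV[R]_n) (s : R).

Lemma dotvC u v : dotv u v = dotv v u.
Proof. by apply: eq_bigr => i _; rewrite mulrC. Qed.

Lemma dotvDl u v w : dotv (u + v) w = dotv u w + dotv v w.
Proof. by rewrite /dotv -big_split; apply: eq_bigr => i _; rewrite mxE mulrDl. Qed.

Lemma dotvZl s u v : dotv (s *: u) v = s * dotv u v.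
Proof. by rewrite /dotv mulr_sumr; apply: eq_bigr => i _; rewrite mxE mulrA. Qed.

Lemma dotvBl u v w : dotv (u - v) w = dotv u w - dotv v w.
Proof. by rewrite dotvDl -scaleN1r dotvZl mulN1r. Qed.

Lemma dotvDr u v w : dotv u (v + w) = dotv u v + dotv u w.
Proof. by rewrite !(dotvC u) dotvDl. Qed.

Lemma dotvZr s u v : dotv u (s *: v) = s * dotv u v.
Proof. by rewrite dotvC dotvZl dotvC. Qed.

Lemma dotvBr u v w : dotv u (v - w) = dotv u v - dotv u w.
Proof. by rewrite !(dotvC u) dotvBl. Qed.

Lemma dotv0r u : dotv u 0 = 0.
Proof. by rewrite /dotv big1 // => i _; rewrite mxE mulr0. Qed.

Lemma dotvv_ge0 v : 0 <= dotv v v.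
Proof. by apply: sumr_ge0 => i _; rewrite -expr2 sqr_ge0. Qed.

Lemma dotvv v : dotv v v = enorm v ^+ 2.
Proof. by rewrite sqr_sqrtr // dotvv_ge0. Qed.

Lemma enorm_ge0 v : 0 <= enorm v.
Proof. exact: sqrtr_ge0. Qed.

Lemma enorm0 : enorm (0 : 'rV[R]_n) = 0.
Proof. by rewrite /enorm dotv0r sqrtr0. Qed.

Lemma enormZ s v : enorm (s *: v) = `|s| * enorm v.
Proof. by rewrite /enorm dotvZl dotvZr mulrA -expr2 sqrtrM ?sqr_ge0 // sqrtr_sqr. Qed.

Lemma dotv_sqr_le u v : dotv u v ^+ 2 <= dotv u u * dotv v v.
Proof.
pose d i j := u 0 i * v 0 j - u 0 j * v 0 i.
have lagrange : \sum_(i < n) \sum_(j < n) d i j ^+ 2 =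
    (dotv u u * dotv v v - dotv u v ^+ 2) *+ 2.
  have sq i j : d i j ^+ 2 = (u 0 i * u 0 i * (v 0 j * v 0 j)
      - u 0 i * v 0 i * (u 0 j * v 0 j)) + (u 0 j * u 0 j * (v 0 i * v 0 i)
      - u 0 j * v 0 j * (u 0 i * v 0 i)) by rewrite /d; ring.
  under eq_bigr do under eq_bigr do rewrite sq.
  rewrite mulr2n; under eq_bigr do rewrite big_split /=.
  rewrite big_split /= [X in _ + X]exchange_big /=.
  by rewrite /dotv expr2 !big_distrlr /= -!sumrB; congr (_ + _);
    apply: eq_bigr => i _; rewrite -sumrB.
have : 0 <= \sum_(i < n) \sum_(j < n) d i j ^+ 2.
  by apply: sumr_ge0 => i _; apply: sumr_ge0 => j _; exact: sqr_ge0.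
by rewrite lagrange pmulrn_lge0 // subr_ge0.
Qed.

Lemma ler_dotv u v : `|dotv u v| <= enorm u * enorm v.
Proof.
by rewrite -sqrtrM ?dotvv_ge0 // -sqrtr_sqr ler_sqrt ?mulr_ge0 ?dotvv_ge0 ?dotv_sqr_le.
Qed.

Lemma ler_enormD u v : enorm (u + v) <= enorm u + enorm v.
Proof.
rewrite -[leRHS]ger0_norm ?addr_ge0 ?enorm_ge0 // -sqrtr_sqr [enorm _]/enorm.
rewrite ler_sqrt ?sqr_ge0 // dotvDl !dotvDr !dotvv (dotvC v u).
have := ler_dotv u v; have := ler_norm (dotv u v); nra.
Qed.

Lemma enormN v : enorm (- v) = enorm v.
Proof. by rewrite -scaleN1r enormZ normrN1 mul1r. Qed.

Lemma ler_dist_enorm u v : `|enorm u - enorm v| <= enorm (u - v).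
Proof.
have := ler_enormD (u - v) v; have := ler_enormD (v - u) u.
rewrite !subrK -opprB enormN => vu uv.
by rewrite ler_norml; apply/andP; split; lra.
Qed.

End euclidean.

Section euclidean_topology.
Context {R : realType} {n : nat}.

Lemma coord_le_enorm (v : 'rV[R]_n) i : `|v 0 i| <= enorm v.
Proof.
rewrite -(sqrtr_sqr (v 0 i)) ler_sqrt ?dotvv_ge0 //.
rewrite /dotv (bigD1 i) //= -expr2 lerDl.
by apply: sumr_ge0 => j _; rewrite -expr2 sqr_ge0.
Qed.

Lemma mx_norm_le_enorm (v : 'rV[R]_n) : `|v| <= enorm v.
Proof.
rewrite [leLHS]/Num.Def.normr /= mx_normrE; apply/bigmax_leP; split => /=.
  exact: enorm_ge0.
by move=> [i j] _ /=; rewrite ord1; exact: coord_le_enorm.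
Qed.

Context {T : Type} {F : set_system T} {FF : Filter F}.

Lemma cvg_dotv {u v : T -> 'rV[R]_n} {u0 v0} : u @ F --> u0 -> v @ F --> v0 ->
  (fun z => dotv (u z) (v z)) @ F --> dotv u0 v0.
Proof.
move=> uu0 vv0; apply: (cvg_big add_continuous) => // i _; apply: cvgM.
  exact: cvg_comp uu0 (@coord_continuous _ 1 n 0 i u0).
exact: cvg_comp vv0 (@coord_continuous _ 1 n 0 i v0).
Qed.

Lemma cvg_enorm {u : T -> 'rV[R]_n} {u0} :
  u @ F --> u0 -> (fun z => enorm (u z)) @ F --> enorm u0.
Proof. by move=> uu0; exact: (cvg_comp _ _ (cvg_dotv uu0 uu0) (@sqrt_continuous R _)). Qed.

End euclidean_topology.

Lemma enorm_continuous {R : realType} {n : nat} : continuous (@enorm R n).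
Proof. by move=> v; exact: (@cvg_enorm R n _ (nbhs v) _ id _ cvg_id). Qed.

Lemma compact_cball {R : realType} (n : nat) (r : R) : compact (cball n r).
Proof.
apply: bounded_closed_compact.
  exists r; split; first by rewrite num_real.
  by move=> M rM v /= vr; rewrite (le_trans (mx_norm_le_enorm v)) // (le_trans vr) ?ltW.
have -> : cball n r = enorm @^-1` [set x | x <= r] by [].
by apply: preimage_closed; [move=> v _; exact: enorm_continuous | exact: closed_le].
Qed.

Lemma continuous_within_comp {X Z W : topologicalType} {D : set X} {E : set Z}
    {m : X -> Z} {g : Z -> W} :
  continuous m -> (forall x, D x -> E (m x)) -> {within E, continuous g} ->
  {within D, continuous (g \o m)}.
Proof.
move=> mc DE /subspace_continuousP gc; apply/subspace_continuousP => x Dx.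
apply: (@cvg_comp _ _ _ m g _ (within E (nbhs (m x)))); last exact: gc (DE _ Dx).
move=> U /= EU.
have := mc x _ EU; rewrite !nbhs_simpl /=; apply: filterS => y EUy Dy.
exact: EUy (DE _ Dy).
Qed.

Lemma compact_norm_bounded {R : realType} {X : topologicalType} (K : set X)
    (h : X -> R) :
  compact K -> {within K, continuous h} -> exists M : R, forall z, K z -> `|h z| <= M.
Proof.
move=> cK hc; have [M [_ hM]] := compact_bounded (continuous_compact hc cK).
by exists (M + 1) => z Kz; apply: (hM (M + 1)); [rewrite ltrDl | exists z].
Qed.

Section compact_sup.
Context {R : realType} {X Y : topologicalType} {S : set X} {A : set Y} {g : X * Y -> R}.
Hypotheses (cA : compact A) (gc : {within S `*` A, continuous g}).

Lemma section_norm_bounded {z} : S z -> exists M : R, forall a, A a -> `|g (z, a)| <= M.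
Proof.
move=> Sz; have [M gM] : exists M : R, forall w, ([set z] `*` A) w -> `|g w| <= M.
  apply: compact_norm_bounded; first exact: compact_setX (@compact_set1 _ z) cA.
  by apply: continuous_subspaceW gc => w [/= -> Aw].
by exists M => a Aa; apply: gM.
Qed.

Lemma tube_unif_lt {z0 e} : S z0 -> 0 < e ->
  \forall z \near within S (nbhs z0), forall a, A a -> `|g (z0, a) - g (z, a)| < e.
Proof.
move=> Sz0 e0; have e2 : 0 < e / 2 by rewrite divr_gt0.
have near_cover := proj1 (compact_near_coveringP A) cA X (within S (nbhs z0))
  (fun z a => S z -> A a -> `|g (z0, a) - g (z, a)| < e) _.
have : \forall z \near within S (nbhs z0),
    forall a, A a -> S z -> A a -> `|g (z0, a) - g (z, a)| < e.
  apply: near_cover => a Aa.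
  have /cvgrPdist_lt/(_ _ e2) [[U V] [/= nU nV] UV] :=
    proj1 (subspace_continuousP _ _) gc (z0, a) (conj Sz0 Aa).
  exists (V, U) => [|[a' z] [/= Va' Uz] Sz Aa']; first by split => //; apply: filterS nU.
  have h1 := UV (z0, a') (conj (nbhs_singleton nU) Va') (conj Sz0 Aa').
  have h2 := UV (z, a') (conj Uz Va') (conj Sz Aa').
  rewrite (splitr e); apply: le_lt_trans (ler_distD (g (z0, a)) _ _) _.
  by rewrite distrC ltrD.
move=> close; near=> z => a Aa; apply: (near close z) => //.
by near: z; exact: withinT.
Unshelve. all: by end_near. Qed.

Lemma continuous_sup_section : A !=set0 ->
  {within S, continuous (fun z => sup [set g (z, a) | a in A])}.
Proof.
move=> A0; apply/subspace_continuousP => z0 Sz0; apply/cvgrPdist_lt => e e0.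
have e2 : 0 < e / 2 by rewrite divr_gt0.
have close := tube_unif_lt Sz0 e2.
have [M0 gM0] := section_norm_bounded Sz0.
near=> z.
have Sz : S z by near: z; exact: withinT.
have [M1 gM1] := section_norm_bounded Sz.
rewrite /from_subspace; apply: (@le_lt_trans _ _ (e / 2)); last first.
  by rewrite ltr_pdivrMr // ltr_pMr // ltr1n.
apply: (dist_sup_image_le (Num.max M0 M1)) => // a Aa.
- by rewrite le_max (le_trans (ler_norm _) (gM0 _ Aa)).
- by rewrite le_max (le_trans (ler_norm _) (gM1 _ Aa)) orbT.
- by apply: ltW; apply: (near close z).
Unshelve. all: by end_near. Qed.

End compact_sup.

Lemma bounded_affine_slope_le0 {R : realFieldType} (a b r : R) :
  (forall s, 1 <= s -> a * s + b <= r) -> a <= 0.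
Proof.
move=> bnd; rewrite leNgt; apply/negP => a0.
have s1 : 1 <= 1 + (`|r| + `|b|) / a by rewrite lerDl divr_ge0 // ltW.
have := bnd _ s1; rewrite mulrDr mulr1 mulrCA divff ?gt_eqF // mulr1.
have := ler_norm r; have := ler_norm (- b); rewrite normrN; lra.
Qed.

Section conjugate.
Context {R : realType} {N : nat} {H : R -> 'rV[R]_N -> 'rV[R]_N -> R}.
Context {t : R} {x : 'rV[R]_N}.

Lemma le_fine_Hstar {v} p :
  domHstar H t x v -> dotv v p - H t x p <= fine (Hstar H t x v).
Proof. by move=> vdom; rewrite -lee_fin fineK //; apply: ereal_sup_ubound; exists p. Qed.

Lemma domHstar_enorm_le L v : 0 <= L -> (forall p, H t x p <= L * enorm p + L) ->
  domHstar H t x v -> enorm v <= L.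
Proof.
move=> L0 HL vdom; rewrite leNgt; apply/negP => Lv.
have : enorm v * (enorm v - L) <= 0.
  apply: (bounded_affine_slope_le0 _ (- L) (fine (Hstar H t x v))) => s s1.
  apply: (le_trans _ (le_fine_Hstar (s *: v) vdom)).
  have := HL (s *: v); rewrite dotvZr dotvv enormZ ger0_norm; last lra.
  nra.
by rewrite leNgt mulr_gt0 ?subr_gt0 // (le_lt_trans L0 Lv).
Qed.

Lemma Hstar_le L v :
  (forall p s, 1 <= s -> H t x (s *: p) <= s * H t x p + (s - 1) * L) ->
  domHstar H t x v -> (Hstar H t x v <= L%:E)%E.
Proof.
move=> Hhom vdom; apply: ge_ereal_sup => _ [p _ <-]; rewrite lee_fin -subr_le0.
apply: (bounded_affine_slope_le0 _ L (fine (Hstar H t x v))) => s s1.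
apply: (le_trans _ (le_fine_Hstar (s *: p) vdom)); rewrite dotvZr.
have := Hhom p s s1; lra.
Qed.

End conjugate.

Definition lam {R : realType} {N : nat} (f : R -> 'rV[R]_N -> 'rV[R]_N.+1 -> 'rV[R]_N)
    (l : R -> 'rV[R]_N -> 'rV[R]_N.+1 -> R) (t : R) (x : 'rV[R]_N) : R :=
  sup [set enorm (f t x a) + `|l t x a| | a in cball N.+1 1].

Section control_hamiltonian.
Context {R : realType} {N : nat} {T : R} {H : R -> 'rV[R]_N -> 'rV[R]_N -> R}
  {f : R -> 'rV[R]_N -> 'rV[R]_N.+1 -> 'rV[R]_N} {l : R -> 'rV[R]_N -> 'rV[R]_N.+1 -> R}.

Local Notation B := (@cball R N.+1 1).
Local Notation S := [set z : R * 'rV[R]_N | tint T z.1].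

Hypothesis H_sup : forall t x p, tint T t ->
  H t x p = sup [set dotv p (f t x a) - l t x a | a in B].
Hypothesis f_cont : {within [set z | tint T z.1.1 /\ B z.2],
  continuous (fun z => f z.1.1 z.1.2 z.2)}.
Hypothesis l_cont : {within [set z | tint T z.1.1 /\ B z.2],
  continuous (fun z => l z.1.1 z.1.2 z.2)}.
Hypothesis fl_lipschitz : forall r : R, 0 <= r -> exists K : R -> R, integ_nonneg T K /\
  {ae lebR, forall t, tint T t -> forall x y a, cball N r x -> cball N r y -> B a ->
    enorm (f t x a - f t y a) + `|l t x a - l t y a| <= K t * enorm (x - y)}.
Hypothesis fl_growth : exists C : R -> R, integ_nonneg T C /\
  {ae lebR, forall t, tint T t -> forall x a, B a ->
    enorm (f t x a) + `|l t x a| <= C t * (1 + enorm x)}.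

Let cB : compact B := compact_cball _ _.

Let B0 : B !=set0.
Proof. by exists 0; rewrite /cball /= enorm0. Qed.

(* The [Filter] instance hint for [almost_everywhere] does not see through [lebR]. *)
Let ae_lebR : Filter (nbhs (almost_everywhere (@lebR R))) :=
  ae_filter_ringOfSetsType lebesgue_measure.

Let fl_cont :
  {within S `*` B, continuous (fun z => enorm (f z.1.1 z.1.2 z.2) + `|l z.1.1 z.1.2 z.2|)}.
Proof.
apply/subspace_continuousP => z Sz; apply: cvgD.
  exact: cvg_enorm (proj1 (subspace_continuousP _ _) f_cont z Sz).
exact: cvg_norm (proj1 (subspace_continuousP _ _) l_cont z Sz).
Qed.

Lemma lam_continuous : {within S, continuous (fun z => lam f l z.1 z.2)}.
Proof. exact: continuous_sup_section cB fl_cont B0. Qed.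

Lemma le_lam {t a} x : tint T t -> B a ->
  enorm (f t x a) + `|l t x a| <= lam f l t x.
Proof.
move=> tt Ba; have [M flM] := section_norm_bounded cB fl_cont (z := (t, x)) tt.
by apply: (sup_image_ub (M := M) _ Ba) => b Bb; rewrite (le_trans (ler_norm _)) ?flM.
Qed.

Lemma lam_ge0 {t} x : tint T t -> 0 <= lam f l t x.
Proof.
move=> tt; have [a Ba] := B0.
by rewrite (le_trans _ (le_lam x tt Ba)) ?addr_ge0 ?enorm_ge0.
Qed.

Lemma integrand_le {t a} x p : tint T t -> B a ->
  dotv p (f t x a) - l t x a <= lam f l t x * enorm p + lam f l t x.
Proof.
move=> tt Ba; have := le_lam x tt Ba; have := ler_dotv p (f t x a).
have := ler_norm (dotv p (f t x a)); have := ler_norm (- l t x a); rewrite normrN.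
have := enorm_ge0 p; have := enorm_ge0 (f t x a); have := normr_ge0 (l t x a).
nra.
Qed.

Lemma integrand_le_H {t a} x p : tint T t -> B a ->
  dotv p (f t x a) - l t x a <= H t x p.
Proof.
by move=> tt Ba; rewrite H_sup //; apply: (sup_image_ub _ Ba) => b; exact: integrand_le.
Qed.

Lemma H_le {t} x p M : tint T t ->
  (forall a, B a -> dotv p (f t x a) - l t x a <= M) -> H t x p <= M.
Proof. by move=> tt ?; rewrite H_sup //; exact: sup_image_le. Qed.

Lemma H_le_affine {t} x p : tint T t -> H t x p <= lam f l t x * enorm p + lam f l t x.
Proof. by move=> tt; apply: H_le => // a; exact: integrand_le. Qed.

Lemma dist_H_le {t} x y p q e : tint T t ->
  (forall a, B a -> `|(dotv p (f t x a) - l t x a) - (dotv q (f t y a) - l t y a)| <= e) ->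
  `|H t x p - H t y q| <= e.
Proof.
move=> tt de; rewrite !H_sup //.
pose M := Num.max (lam f l t x * enorm p + lam f l t x)
  (lam f l t y * enorm q + lam f l t y).
apply: (dist_sup_image_le M) => // a Ba.
- by rewrite le_max integrand_le.
- by rewrite le_max integrand_le ?orbT.
Qed.

Lemma H_continuous : H1 T H.
Proof.
pose m (w : R * 'rV[R]_N * 'rV[R]_N * 'rV[R]_N.+1) := (w.1.1.1, w.1.1.2, w.2).
have mc : continuous m.
  move=> w; apply: (cvg_pair (G := nbhs (w.1.1.1, w.1.1.2)) (H := nbhs w.2)).
    apply: (cvg_pair (G := nbhs w.1.1.1) (H := nbhs w.1.1.2)).
      exact: (cvg_comp _ _ (cvg_comp _ _ cvg_fst cvg_fst) cvg_fst).
    exact: (cvg_comp _ _ (cvg_comp _ _ cvg_fst cvg_fst) cvg_snd).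
  exact: cvg_snd.
pose S' := [set z : R * 'rV[R]_N * 'rV[R]_N | tint T z.1.1].
have mS : forall w, (S' `*` B) w -> (S `*` B) (m w) by [].
have fm := continuous_within_comp mc mS f_cont.
have lm := continuous_within_comp mc mS l_cont.
have gc : {within S' `*` B, continuous
    (fun w => dotv w.1.2 (f w.1.1.1 w.1.1.2 w.2) - l w.1.1.1 w.1.1.2 w.2)}.
  apply/subspace_continuousP => w Sw; apply: cvgB.
    apply: cvg_dotv; last exact: (proj1 (subspace_continuousP _ _) fm w Sw).
    by apply: cvg_within_filter; exact: (cvg_comp _ _ cvg_fst cvg_snd).
  exact: (proj1 (subspace_continuousP _ _) lm w Sw).
apply: subspace_eq_continuous (continuous_sup_section cB gc B0) => z /set_mem tz.
by rewrite /from_subspace /= H_sup.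
Qed.

Lemma H_convex : H2 T H.
Proof.
move=> t x tt p q s /andP[s0 s1]; apply: H_le => // a Ba.
have := integrand_le_H x p tt Ba; have := integrand_le_H x q tt Ba.
rewrite dotvDl !dotvZl; nra.
Qed.

Lemma H_scale_le {t} x p s : tint T t -> 1 <= s ->
  H t x (s *: p) <= s * H t x p + (s - 1) * lam f l t x.
Proof.
move=> tt s1; apply: H_le => // a Ba; rewrite dotvZl.
have := integrand_le_H x p tt Ba; have := le_lam x tt Ba.
have := ler_norm (l t x a); have := enorm_ge0 (f t x a); nra.
Qed.

Lemma H_lipschitz_p {t} x p q : tint T t ->
  `|H t x p - H t x q| <= lam f l t x * enorm (p - q).
Proof.
move=> tt; apply: dist_H_le => // a Ba.
rewrite opprB addrA subrK -dotvBl mulrC (le_trans (ler_dotv _ _)) //.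
by rewrite ler_wpM2l ?enorm_ge0 // (le_trans _ (le_lam x tt Ba)) // lerDl.
Qed.

Lemma H_lipschitz_p_ball : H3 T H.
Proof.
move=> r r0; have [M lamM] : exists M : R,
    forall z, (tint T `*` cball N r) z -> `|lam f l z.1 z.2| <= M.
  apply: compact_norm_bounded; last first.
    by apply: continuous_subspaceW lam_continuous => z [].
  apply: compact_setX (compact_cball _ _).
  have -> : tint T = `[0, T]%classic by apply/seteqP; split => u /=; rewrite in_itv.
  exact: segment_compact.
exists (Num.max M 0); split => [|t x p q tt xr]; first by rewrite le_max lexx orbT.
rewrite (le_trans (H_lipschitz_p x p q tt)) // ler_wpM2r ?enorm_ge0 // le_max.
by rewrite (le_trans (ler_norm _) (lamM (t, x) _)).
Qed.

Lemma lam_growth : exists theta : R -> R, integ_nonneg T theta /\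
  {ae lebR, forall t, tint T t -> forall x, lam f l t x <= theta t * (1 + enorm x)}.
Proof.
have [C [Ci C_ae]] := fl_growth; exists C; split => //.
apply: (filterS (Filter := ae_lebR)) C_ae => t Ct tt x.
by apply: sup_image_le => // a; exact: Ct.
Qed.

Lemma H_lipschitz_p_growth : H4 T H.
Proof.
have [C [Ci lamC]] := lam_growth; exists C; split => //.
apply: (filterS (Filter := ae_lebR)) lamC => t lamCt tt x p q.
by rewrite (le_trans (H_lipschitz_p x p q tt)) // ler_wpM2r ?enorm_ge0 ?lamCt.
Qed.

Lemma H_lipschitz_x : H5 T H.
Proof.
move=> r r0; have [K [Ki K_ae]] := fl_lipschitz r r0; exists K; split => //.
apply: (filterS (Filter := ae_lebR)) K_ae => t Kt tt x y p xr yr.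
apply: dist_H_le => // a Ba.
have -> : dotv p (f t x a) - l t x a - (dotv p (f t y a) - l t y a) =
    dotv p (f t x a - f t y a) - (l t x a - l t y a) by rewrite dotvBr; ring.
have := Kt tt x y a xr yr Ba; have := ler_dotv p (f t x a - f t y a).
have := ler_normB (dotv p (f t x a - f t y a)) (l t x a - l t y a).
have := enorm_ge0 p; have := enorm_ge0 (f t x a - f t y a).
have := normr_ge0 (l t x a - l t y a); nra.
Qed.

Lemma lam_lipschitz r : 0 <= r -> exists zeta : R -> R, integ_nonneg T zeta /\
  {ae lebR, forall t, tint T t -> forall x y, cball N r x -> cball N r y ->
    `|lam f l t x - lam f l t y| <= zeta t * enorm (x - y)}.
Proof.
move=> r0; have [K [Ki K_ae]] := fl_lipschitz r r0; exists K; split => //.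
apply: (filterS (Filter := ae_lebR)) K_ae => t Kt tt x y xr yr.
apply: (dist_sup_image_le (Num.max (lam f l t x) (lam f l t y))) => // a Ba.
- by rewrite le_max le_lam.
- by rewrite le_max le_lam ?orbT.
apply: le_trans (Kt tt x y a xr yr Ba); rewrite opprD addrACA.
exact: le_trans (ler_normD _ _) (lerD (ler_dist_enorm _ _) (ler_dist_dist _ _)).
Qed.

Lemma domHstar_le_lam t x : tint T t ->
  forall v, domHstar H t x v -> enorm v <= lam f l t x.
Proof.
by move=> tt v; apply: domHstar_enorm_le (lam_ge0 x tt) _ => p; exact: H_le_affine.
Qed.

Lemma abse_Hstar_le_lam t x : tint T t ->
  forall v, domHstar H t x v -> (`|Hstar H t x v| <= (lam f l t x)%:E)%E.
Proof.
move=> tt v vdom; rewrite -[Hstar H t x v]fineK // abse_EFin lee_fin ler_norml.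
apply/andP; split.
  have := le_fine_Hstar 0 vdom; have := H_le_affine x 0 tt.
  by rewrite dotv0r enorm0; lra.
rewrite -lee_fin fineK //; apply: Hstar_le vdom => p s s1; exact: H_scale_le.
Qed.

End control_hamiltonian.

Theorem theorem3p2 (R : realType) (N : nat) (T : R)
  (H : R -> 'rV[R]_N -> 'rV[R]_N -> R)
  (f : R -> 'rV[R]_N -> 'rV[R]_N.+1 -> 'rV[R]_N)
  (l : R -> 'rV[R]_N -> 'rV[R]_N.+1 -> R) :
  (* H(t,x,p) = sup_{a in B} { <p, f(t,x,a)> - l(t,x,a) } *)
  (forall t x p, tint T t ->
     H t x p = sup [set dotv p (f t x a) - l t x a | a in cball N.+1 1]) ->
  (* (R1) *)
  {within [set z : R * 'rV[R]_N * 'rV[R]_N.+1 | tint T z.1.1 /\ cball N.+1 1 z.2],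
    continuous (fun z : R * 'rV[R]_N * 'rV[R]_N.+1 => f z.1.1 z.1.2 z.2)} ->
  {within [set z : R * 'rV[R]_N * 'rV[R]_N.+1 | tint T z.1.1 /\ cball N.+1 1 z.2],
    continuous (fun z : R * 'rV[R]_N * 'rV[R]_N.+1 => l z.1.1 z.1.2 z.2)} ->
  (* (R2) *)
  (forall r : R, 0 <= r -> exists K : R -> R, integ_nonneg T K /\
     {ae lebR, forall t, tint T t -> forall x y a,
        cball N r x -> cball N r y -> cball N.+1 1 a ->
        enorm (f t x a - f t y a) + `|l t x a - l t y a| <= K t * enorm (x - y)}) ->
  (* (R3) *)
  (exists C : R -> R, integ_nonneg T C /\
     {ae lebR, forall t, tint T t -> forall x a, cball N.+1 1 a ->
        enorm (f t x a) + `|l t x a| <= C t * (1 + enorm x)}) ->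
  condA T H.
Proof.
move=> H_sup f_cont l_cont fl_lipschitz fl_growth.
split; first exact: H_continuous H_sup f_cont l_cont.
split; first exact: H_convex H_sup f_cont l_cont.
split; first exact: H_lipschitz_p_ball H_sup f_cont l_cont.
split; first exact: H_lipschitz_p_growth H_sup f_cont l_cont fl_growth.
split; first exact: H_lipschitz_x H_sup f_cont l_cont fl_lipschitz.
exists (lam f l); split; first exact: lam_continuous f_cont l_cont.
split; first by move=> t x; apply: lam_ge0.
split; first exact: domHstar_le_lam H_sup f_cont l_cont.
split; first exact: abse_Hstar_le_lam H_sup f_cont l_cont.
split; first exact: lam_lipschitz f_cont l_cont fl_lipschitz.
exact: lam_growth fl_growth.
Qed.
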